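(* Let $\mathbf Q$, $(Z_n)$ be as in the context. For all $k\ge0$ and $n\ge1$, $\mathbf Q[Z_1\le k\mid Z_n=0]\ge\mathbf Q[Z_1\le k]$. In particular, $E_{\mathbf Q}[Z_i\mid Z_n=0]\le\mathbf f'(q)^i$ for all $i\ge0$ and $n\ge1$.
   Context: $(p_k)_{k\ge0}$ is a probability distribution on $\{0,1,\dots\}$ with generating function $\mathbf f$, $p_0>0$ and $\mathbf f'(1)\in(1,\infty)$; $q\in(0,1)$ is its extinction probability ($\mathbf f(q)=q$). $\mathbf Q$ is the law of a Galton–Watson tree with offspring distribution $q_k=p_kq^{k-1}$, $k\ge0$, which has mean $\mathbf f'(q)<1$; $Z_n$ denotes the number of vertices in generation $n$ ($Z_0=1$). *)

(* generation sizes of a Galton-Watson tree,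
   described through their (Markov-chain) finite-dimensional laws. *)
From mathcomp Require Import all_boot all_order all_algebra.
From mathcomp Require Import all_classical all_reals all_analysis.
Set Implicit Arguments. Unset Strict Implicit. Unset Printing Implicit Defensive.
Import Order.TTheory GRing.Theory Num.Theory.
Local Open Scope ring_scope.
Local Open Scope ereal_scope.

Section GW.
Variable R : realType.

Definition is_pmf (p : nat -> R) : Prop :=
  (forall k, (0 <= p k)%R) /\ \sum_(0 <= k <oo) (p k)%:E = 1.

Definition genfun (p : nat -> R) (s : R) : \bar R :=
  \sum_(0 <= k <oo) (p k * s ^+ k)%:E.

Definition mean (p : nat -> R) : \bar R :=
  \sum_(0 <= k <oo) (k%:R * p k)%:E.

(* the conditioned offspring law q_k = p_k q^(k-1) *)
Definition qlaw (p : nat -> R) (q : R) (k : nat) : R := p k * q^-1 * q ^+ k.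

(* a-fold convolution power of an offspring law o: law of the total
   number of children of a individuals *)
Fixpoint conv (o : nat -> R) (a : nat) (b : nat) : R :=
  match a with
  | 0 => (b == 0%N)%:R
  | a'.+1 => (\sum_(i < b.+1) o i * conv o a' (b - i))%R
  end.

(* n-step transition probabilities of the generation-size chain:
   kpow o n a b = P(Z_{m+n} = b | Z_m = a) *)
Fixpoint kpow (o : nat -> R) (n : nat) (a b : nat) : \bar R :=
  match n with
  | 0 => ((a == b)%:R)%:E
  | n'.+1 => \sum_(0 <= c <oo) (kpow o n' a c * (conv o c b)%:E)
  end.

(* two-time joint law P(Z_i = a, Z_n = b) for the process started at Z_0 = 1 *)
Definition jointZ (o : nat -> R) (i n a b : nat) : \bar R :=
  if (i <= n)%N then kpow o i 1 a * kpow o (n - i) a b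
  else kpow o n 1 b * kpow o (i - n) b a.

Definition probZ (o : nat -> R) (n b : nat) : \bar R := kpow o n 1 b.

Definition prob_Z1_le (o : nat -> R) (k : nat) : \bar R :=
  \sum_(0 <= a < k.+1) probZ o 1 a.

Definition cond_Z1_le (o : nat -> R) (k n : nat) : \bar R :=
  (\sum_(0 <= a < k.+1) jointZ o 1 n a 0) * (probZ o n 0)^-1.

Definition condexp_Zi (o : nat -> R) (i n : nat) : \bar R :=
  (\sum_(0 <= a <oo) (a%:R)%:E * jointZ o i n a 0) * (probZ o n 0)^-1.

End GW.

From Pilot Require Import Defs.
From mathcomp Require Import all_boot all_order all_algebra.
From mathcomp Require Import all_classical all_reals all_analysis.
From mathcomp Require Import lra ring.
Import Order.TTheory GRing.Theory Num.Theory.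
Local Open Scope ring_scope.
Local Open Scope ereal_scope.

(* Write [f] for the generating function of the offspring law [o] and
   [g = f^(n-1)(0) = P(Z_(n-1) = 0)]. Conditioning on [Z_n = 0] tilts the law of
   [Z_1] to [o_a g^a / f(g)]; since [a |-> g^a] is nonincreasing, the tilt moves
   mass towards small values, which is the first inequality.
   For the second, [E[Z_i; Z_n = 0] = s (f^i)'(s)] at [s = f^(n-i)(0)]. The chain
   rule and [s f'(s) <= m f(s)], with [m = f'(1)] the mean of [o], give
   [s (f^i)'(s) <= m^i f^i(s)] by induction on [i], and [f^i(s) = P(Z_n = 0)]. *)

Section nneseries_facts.
Context {R : realType}.
Implicit Types (f : nat -> \bar R).

Lemma nneseries_single f a : (forall i, 0 <= f i) -> (forall i, i != a -> f i = 0) ->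
  \sum_(i <oo) f i = f a.
Proof.
move=> f0 fa; rewrite (@nneseriesD1 _ f a xpredT) //.
by rewrite eseries0 ?adde0 // => i _ /andP[_ ia]; exact: fa.
Qed.

Lemma term_le_nneseries f k : (forall i, 0 <= f i) -> f k <= \sum_(i <oo) f i.
Proof. by move=> f0; rewrite (@nneseriesD1 _ f k xpredT) // leeDl // nneseries_ge0. Qed.

Lemma nneseries_term_fin f x k : (forall i, 0 <= f i) ->
  \sum_(i <oo) f i = x%:E -> f k = (fine (f k))%:E.
Proof.
move=> f0 fx; rewrite fineK // ge0_fin_numE //.
by rewrite (le_lt_trans (term_le_nneseries _ k f0)) // fx ltry.
Qed.

Lemma nneseries_cauchy_product (x y : nat -> R) :
  (forall i, (0 <= x i)%R) -> (forall j, (0 <= y j)%R) ->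
  \sum_(b <oo) (\sum_(i < b.+1) x i * y (b - i)%N)%:E =
  \sum_(i <oo) ((x i)%:E * \sum_(j <oo) (y j)%:E).
Proof.
move=> x0 y0.
pose t i b := if (i <= b)%N then (x i * y (b - i)%N)%:E else 0.
have t0 i b : 0 <= t i b by rewrite /t; case: ifP => // _; rewrite lee_fin mulr_ge0.
transitivity (\sum_(b <oo) \sum_(i <oo) t i b).
  apply: eq_eseriesr => b _.
  rewrite (nneseries_split 0 b.+1) // add0n eseries0 ?adde0; last first.
    by move=> i bi _; rewrite /t leqNgt bi.
  rewrite -sumEFin big_mkord; apply: eq_bigr => i _.
  by rewrite /t -ltnS ltn_ord.
rewrite nneseries_interchange //; apply: eq_eseriesr => i _.
rewrite (nneseries_split 0 i) // add0n big1_seq ?add0e; last first.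
  by move=> k; rewrite mem_index_iota => /and3P[_ _ ki]; rewrite /t leqNgt ki.
rewrite -(@nneseries_addn _ (t i) i) // -nneseriesZl; last by move=> j _; rewrite lee_fin.
by apply: eq_eseriesr => j _; rewrite /t leq_addl addnK.
Qed.

End nneseries_facts.

Section generating_functions.
Context {R : realType}.
Variable o : nat -> R.
Hypothesis o_ge0 : forall k, (0 <= o k)%R.
Hypothesis o_sum1 : \sum_(k <oo) (o k)%:E = 1.

Definition pgf (s : R) : R := fine (genfun o s).

Lemma genfun_le1 s : (0 <= s <= 1)%R -> genfun o s <= 1.
Proof.
move=> /andP[s0 s1]; rewrite -o_sum1; apply: lee_nneseries => k _.
  by rewrite lee_fin mulr_ge0 // exprn_ge0.
by rewrite lee_fin ler_piMr // exprn_ile1.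
Qed.

Lemma genfun_pgf s : (0 <= s <= 1)%R -> genfun o s = (pgf s)%:E.
Proof.
move=> s01; have /andP[s0 _] := s01.
rewrite /pgf fineK // ge0_fin_numE; first by rewrite (le_lt_trans (genfun_le1 _ s01)) ?ltry.
by apply: nneseries_ge0 => k _ _; rewrite lee_fin mulr_ge0 // exprn_ge0.
Qed.

Lemma pgf_ge s : (0 <= s <= 1)%R -> (o 0%N <= pgf s)%R.
Proof.
move=> s01; have /andP[s0 _] := s01.
rewrite -lee_fin -genfun_pgf //.
have := @term_le_nneseries _ (fun k => (o k * s ^+ k)%:E) 0%N.
by rewrite expr0 mulr1; apply => k; rewrite lee_fin mulr_ge0 // exprn_ge0.
Qed.

Lemma pgf_le1 s : (0 <= s <= 1)%R -> (pgf s <= 1)%R.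
Proof. by move=> s01; rewrite -lee_fin -genfun_pgf // genfun_le1. Qed.

Lemma pgf_itv s : (0 <= s <= 1)%R -> (0 <= pgf s <= 1)%R.
Proof. by move=> s01; rewrite pgf_le1 // (le_trans _ (pgf_ge _ s01)). Qed.

Lemma pgf_gt0 s : (0 < o 0%N)%R -> (0 <= s <= 1)%R -> (0 < pgf s)%R.
Proof. by move=> o0 s01; rewrite (lt_le_trans o0) ?pgf_ge. Qed.

Lemma iter_pgf_itv n s : (0 <= s <= 1)%R -> (0 <= iter n pgf s <= 1)%R.
Proof. by move=> s01; elim: n => //= n; exact: pgf_itv. Qed.

Lemma conv_ge0 c b : (0 <= Defs.conv o c b)%R.
Proof.
elim: c b => [b|c IH b] /=; first by case: (b == 0%N).
by apply: sumr_ge0 => i _; rewrite mulr_ge0.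
Qed.

Lemma conv_genfun c s : (0 <= s <= 1)%R ->
  \sum_(b <oo) (Defs.conv o c b * s ^+ b)%:E = (pgf s ^+ c)%:E.
Proof.
move=> s01; have /andP[s0 _] := s01.
elim: c => [|c IH].
  rewrite (@nneseries_single _ _ 0%N) /= ?mul1r ?expr0 //.
    by move=> i; rewrite lee_fin mulr_ge0 // ?exprn_ge0 //; case: (i == 0%N).
  by move=> i /negPf ->; rewrite mul0r.
transitivity (\sum_(b <oo) (\sum_(i < b.+1) (o i * s ^+ i) *
                      (Defs.conv o c (b - i)%N * s ^+ (b - i)%N))%:E).
  apply: eq_eseriesr => b _ /=; congr (_%:E).
  rewrite big_distrl /=; apply: eq_bigr => i _.
  by rewrite mulrACA -exprD subnKC // -ltnS ltn_ord.
rewrite (@nneseries_cauchy_product _ (fun i => o i * s ^+ i)%R (fun j => Defs.conv o c j * s ^+ j)%R); last 2 first.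
- by move=> i; rewrite mulr_ge0 // exprn_ge0.
- by move=> j; rewrite mulr_ge0 // ?conv_ge0 // exprn_ge0.
rewrite IH; under eq_eseriesr do rewrite muleC.
rewrite nneseriesZl; last by move=> i _; rewrite lee_fin mulr_ge0 // exprn_ge0.
by rewrite -/(genfun o s) genfun_pgf // -EFinM exprSr.
Qed.

Lemma kpow_ge0 n a b : 0 <= kpow o n a b.
Proof.
elim: n a b => [a b|n IH a b] /=; first by rewrite lee_fin; case: (a == b).
by apply: nneseries_ge0 => c _ _; rewrite mule_ge0 // lee_fin conv_ge0.
Qed.

Lemma kpow_genfun n a s : (0 <= s <= 1)%R ->
  \sum_(b <oo) kpow o n a b * (s ^+ b)%:E = ((iter n pgf s) ^+ a)%:E.
Proof.
elim: n a s => [a s s01|n IH a s s01].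
  rewrite (@nneseries_single _ _ a) /= ?eqxx ?mul1e //.
  - by move=> i; rewrite mule_ge0 ?kpow_ge0 // lee_fin exprn_ge0 // (andP s01).1.
  - by move=> i ia; rewrite eq_sym (negPf ia) mul0e.
have /andP[s0 _] := s01.
have kfin c : kpow o n a c = (fine (kpow o n a c))%:E.
  have := @nneseries_term_fin _ _ _ c _ (IH a 1%R _).
  rewrite expr1n mule1; apply => [i|]; first by rewrite expr1n mule1 kpow_ge0.
  by rewrite ler01 lexx.
transitivity (\sum_(b <oo) \sum_(c <oo)
   (fine (kpow o n a c) * (Defs.conv o c b * s ^+ b))%:E).
  apply: eq_eseriesr => b _; rewrite /= muleC -nneseriesZl; last first.
    by move=> c _; rewrite mule_ge0 ?kpow_ge0 // lee_fin conv_ge0.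
  apply: eq_eseriesr => c _; rewrite [kpow o n a c]kfin -!EFinM.
  by congr (_%:E); ring.
rewrite nneseries_interchange; last first.
  by move=> c b; rewrite lee_fin mulr_ge0 ?fine_ge0 ?kpow_ge0 // mulr_ge0 ?conv_ge0 // exprn_ge0.
transitivity (\sum_(c <oo) kpow o n a c * ((pgf s) ^+ c)%:E).
  apply: eq_eseriesr => c _; under eq_eseriesr do rewrite EFinM.
  rewrite nneseriesZl; last by move=> b _; rewrite lee_fin mulr_ge0 ?conv_ge0 // exprn_ge0.
  by rewrite conv_genfun // -kfin.
by rewrite IH ?pgf_itv // -iterSr.
Qed.

Lemma kpow_fin n a b : kpow o n a b = (fine (kpow o n a b))%:E.
Proof.
have := @nneseries_term_fin _ _ _ b _ (kpow_genfun n a 1%R _).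
rewrite expr1n mule1; apply => [i|]; first by rewrite expr1n mule1 kpow_ge0.
by rewrite ler01 lexx.
Qed.

Lemma kpow_to0 n a : kpow o n a 0%N = ((iter n pgf 0) ^+ a)%:E.
Proof.
rewrite -kpow_genfun ?lexx ?ler01 // (@nneseries_single _ _ 0%N).
- by rewrite expr0 mule1.
- by move=> i; rewrite mule_ge0 ?kpow_ge0 // lee_fin exprn_ge0.
- by move=> i i0; rewrite expr0n (negPf i0) mule0.
Qed.

Lemma kpow1_from1 a : kpow o 1 1 a = (o a)%:E.
Proof.
have conv1 : Defs.conv o 1 a = o a.
  rewrite /= big_ord_recr /= subnn eqxx mulr1 big1 ?add0r // => i _.
  by rewrite subn_eq0 leqNgt ltn_ord mulr0.
rewrite /= (@nneseries_single _ _ 1%N).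
- by rewrite eqxx mul1e conv1.
- by move=> i; rewrite mule_ge0 // lee_fin ?conv_ge0 //; case: (1 == i)%N.
- by move=> i i1; rewrite eq_sym (negPf i1) mul0e.
Qed.

Lemma kpow_from0 n a : kpow o n 0 a = ((a == 0%N)%:R)%:E.
Proof.
elim: n a => [a|n IH a] /=; first by rewrite eq_sym.
rewrite (@nneseries_single _ _ 0%N) /= ?IH /= ?mul1e //.
- by move=> i; rewrite mule_ge0 ?kpow_ge0 // lee_fin conv_ge0.
- by move=> i i0; rewrite IH (negPf i0) mul0e.
Qed.

End generating_functions.

Section finite_mean.
Context {R : realType}.
Variable o : nat -> R.
Hypothesis o_ge0 : forall k, (0 <= o k)%R.
Hypothesis o_sum1 : \sum_(k <oo) (o k)%:E = 1.
Hypothesis o0_gt0 : (0 < o 0%N)%R.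
Variable m : R.
Hypothesis mean_o : mean o = m%:E.

Local Notation pgf := (pgf o).

Lemma mean_ge0 : (0 <= m)%R.
Proof.
by rewrite -lee_fin -mean_o; apply: nneseries_ge0 => k _ _; rewrite lee_fin mulr_ge0.
Qed.

(* [Dpgf s] is [s pgf'(s)], written as a power series. *)
Definition Dpgf (s : R) : R := fine (\sum_(b <oo) (b%:R * o b * s ^+ b)%:E).

Lemma Dpgf_EFin s : (0 <= s <= 1)%R ->
  \sum_(b <oo) (b%:R * o b * s ^+ b)%:E = (Dpgf s)%:E.
Proof.
move=> /andP[s0 s1].
have le_mean : \sum_(b <oo) (b%:R * o b * s ^+ b)%:E <= m%:E.
  rewrite -mean_o; apply: lee_nneseries => b _.
    by rewrite lee_fin !mulr_ge0 // exprn_ge0.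
  by rewrite lee_fin ler_piMr ?mulr_ge0 // exprn_ile1.
rewrite /Dpgf fineK // ge0_fin_numE; first by rewrite (le_lt_trans le_mean) ?ltry.
by apply: nneseries_ge0 => b _ _; rewrite lee_fin !mulr_ge0 // exprn_ge0.
Qed.

Lemma Dpgf_ge0 s : (0 <= s <= 1)%R -> (0 <= Dpgf s)%R.
Proof.
move=> s01; have /andP[s0 _] := s01; rewrite -lee_fin -Dpgf_EFin //.
by apply: nneseries_ge0 => b _ _; rewrite lee_fin !mulr_ge0 // exprn_ge0.
Qed.

Lemma conv_Dgenfun c s : (0 <= s <= 1)%R ->
  \sum_(b <oo) (b%:R * Defs.conv o c b * s ^+ b)%:E =
  (c%:R * pgf s ^+ c.-1 * Dpgf s)%:E.
Proof.
move=> s01; have /andP[s0 _] := s01.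
elim: c => [|c IH].
  rewrite !mul0r eseries0 // => b _ _ /=.
  by case: b => [|b]; rewrite /= ?mul0r ?mulr0 ?mul0r.
transitivity (\sum_(b <oo)
  ((\sum_(i < b.+1) (i%:R * o i * s ^+ i) * (Defs.conv o c (b - i)%N * s ^+ (b - i)%N))%:E
 + (\sum_(i < b.+1) (o i * s ^+ i) * ((b - i)%N%:R * Defs.conv o c (b - i)%N * s ^+ (b - i)%N))%:E)).
  apply: eq_eseriesr => b _ /=; rewrite -EFinD -big_split /=; congr (_%:E).
  rewrite big_distrr big_distrl /=; apply: eq_bigr => i _.
  have ib : (i <= b)%N by rewrite -ltnS ltn_ord.
  move: (nat_of_ord i) ib => k kb; clear i.
  move: (b - k)%N (subnKC kb) => j <-.
  by rewrite natrD exprD; ring.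
rewrite nneseriesD; last 2 first.
- by move=> b _ _; rewrite lee_fin sumr_ge0 // => i _; rewrite !mulr_ge0 ?conv_ge0 // exprn_ge0.
- by move=> b _ _; rewrite lee_fin sumr_ge0 // => i _; rewrite !mulr_ge0 ?conv_ge0 // exprn_ge0.
rewrite (@nneseries_cauchy_product _ (fun i => i%:R * o i * s ^+ i)%R
  (fun j => Defs.conv o c j * s ^+ j)%R); last 2 first.
- by move=> i; rewrite !mulr_ge0 // exprn_ge0.
- by move=> j; rewrite mulr_ge0 // ?conv_ge0 // exprn_ge0.
rewrite (@nneseries_cauchy_product _ (fun i => o i * s ^+ i)%R
  (fun j => j%:R * Defs.conv o c j * s ^+ j)%R); last 2 first.
- by move=> i; rewrite !mulr_ge0 // exprn_ge0.
- by move=> j; rewrite !mulr_ge0 // ?conv_ge0 // exprn_ge0.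
rewrite conv_genfun // IH.
under eq_eseriesr do rewrite muleC.
rewrite nneseriesZl; last by move=> i _; rewrite lee_fin !mulr_ge0 // exprn_ge0.
under [X in _ + X = _]eq_eseriesr do rewrite muleC.
rewrite nneseriesZl; last by move=> i _; rewrite lee_fin !mulr_ge0 // exprn_ge0.
rewrite -/(genfun o s) Dpgf_EFin // genfun_pgf // -!EFinM -EFinD; congr (_%:E).
case: c {IH} => [|c] /=; first by rewrite !expr0 !mul0r addr0 !mul1r.
by rewrite exprSr -[c.+2]addn1 natrD; ring.
Qed.

(* Chebyshev's sum inequality: with [t = s^K] and [K > m], the sequences
   [b - m] and [s^b - t] are oppositely ordered, and [sum_b (b - m) o_b = 0]. *)
Lemma Dpgf_le s : (0 <= s <= 1)%R -> (Dpgf s <= m * pgf s)%R.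
Proof.
move=> s01; have /andP[s0 s1] := s01; have m0 := mean_ge0.
set K := (Num.truncn m).+1; set t := (s ^+ K)%R.
have t0 : (0 <= t)%R by rewrite exprn_ge0.
have oppositely_ordered b : ((b%:R - m) * (s ^+ b - t) <= 0)%R.
  have [Kb|bK] := leqP K b.
  - apply: mulr_ge0_le0; last by rewrite subr_le0 /t ler_wiXn2l.
    by rewrite subr_ge0 ltW // (lt_le_trans (truncnS_gt m)) // ler_nat.
  - apply: mulr_le0_ge0; last by rewrite subr_ge0 /t ler_wiXn2l // ltnW.
    rewrite subr_le0 (le_trans _ (_ : (Num.truncn m)%:R <= m)%R) ?truncn_le ?m0 //.
    by rewrite ler_nat -ltnS.
have termwise b : (b%:R * o b * s ^+ b + m * t * o b <=
                   t * (b%:R * o b) + m * (o b * s ^+ b))%R.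
  have := oppositely_ordered b; have ob := o_ge0 b.
  have sb : (0 <= s ^+ b)%R by rewrite exprn_ge0.
  nra.
have sumZ (c : R) (x : nat -> R) : (0 <= c)%R -> (forall b, 0 <= x b)%R ->
    \sum_(b <oo) (c * x b)%:E = c%:E * \sum_(b <oo) (x b)%:E.
  move=> c0 x0; under eq_eseriesr do rewrite EFinM.
  by rewrite nneseriesZl // => b _; rewrite lee_fin.
have e1 : \sum_(b <oo) (m * t * o b)%:E = (m * t)%:E.
  by rewrite sumZ ?mulr_ge0 // o_sum1 mule1.
have e2 : \sum_(b <oo) (t * (b%:R * o b))%:E = (t * m)%:E.
  by rewrite sumZ // => [|b]; rewrite ?mulr_ge0 // -/(mean o) mean_o -EFinM.
have e3 : \sum_(b <oo) (m * (o b * s ^+ b))%:E = (m * pgf s)%:E.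
  rewrite sumZ // => [|b]; last by rewrite mulr_ge0 // exprn_ge0.
  by rewrite -/(genfun o s) genfun_pgf // -EFinM.
have : (Dpgf s)%:E + (m * t)%:E <= (t * m)%:E + (m * pgf s)%:E.
  rewrite -Dpgf_EFin // -e1 -e2 -e3.
  rewrite -!nneseriesD; last 4 first.
    1-4: by move=> b _ _; rewrite lee_fin !mulr_ge0 ?exprn_ge0.
  apply: lee_nneseries => b _; last by rewrite -!EFinD lee_fin termwise.
  by rewrite -EFinD lee_fin addr_ge0 ?mulr_ge0 ?exprn_ge0.
rewrite -!EFinD lee_fin; lra.
Qed.

(* [EZs i s] is [E[Z_i s^Z_i]] for the process started from one individual,
   that is [s (pgf^i)'(s)]. *)
Definition EZs i (s : R) : \bar R :=
  \sum_(a <oo) (a%:R)%:E * (kpow o i 1 a * (s ^+ a)%:E).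

Lemma EZs0 s : (0 <= s)%R -> EZs 0 s = s%:E.
Proof.
move=> s0; rewrite /EZs (@nneseries_single _ _ 1%N) /= ?eqxx ?mul1e ?expr1 //.
- move=> a; apply: mule_ge0; first by rewrite lee_fin.
  by apply: mule_ge0; rewrite lee_fin ?exprn_ge0 //; case: (1 == a)%N.
- by move=> a a1; rewrite eq_sym (negPf a1) mul0e mule0.
Qed.

Lemma EZsS i s : (0 <= s <= 1)%R ->
  EZs i.+1 s = \sum_(c <oo) (fine (kpow o i 1 c))%:E * (c%:R * pgf s ^+ c.-1 * Dpgf s)%:E.
Proof.
move=> s01; have /andP[s0 _] := s01.
transitivity (\sum_(b <oo) \sum_(c <oo)
   (fine (kpow o i 1 c) * (b%:R * Defs.conv o c b * s ^+ b))%:E).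
  apply: eq_eseriesr => b _.
  rewrite /= muleCA muleC -EFinM -nneseriesZl; last first.
    by move=> c _; rewrite mule_ge0 ?kpow_ge0 // lee_fin conv_ge0.
  apply: eq_eseriesr => c _; rewrite [kpow o i 1 c]kpow_fin // -!EFinM.
  by congr (_%:E); ring.
rewrite nneseries_interchange; last first.
  move=> b c; rewrite lee_fin mulr_ge0 ?fine_ge0 ?kpow_ge0 //.
  by rewrite !mulr_ge0 ?conv_ge0 // exprn_ge0.
apply: eq_eseriesr => c _; under eq_eseriesr do rewrite EFinM.
rewrite nneseriesZl ?conv_Dgenfun // => b _.
by rewrite lee_fin !mulr_ge0 ?conv_ge0 // exprn_ge0.
Qed.

Lemma pgf_mul_EZsS i s : (0 <= s <= 1)%R ->
  (pgf s)%:E * EZs i.+1 s = (Dpgf s)%:E * EZs i (pgf s).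
Proof.
move=> s01; have /andP[F0 _] := pgf_itv _ o_ge0 o_sum1 _ s01.
rewrite EZsS // -nneseriesZl; last first.
  by move=> c _; rewrite mule_ge0 // lee_fin ?fine_ge0 ?kpow_ge0 // !mulr_ge0 ?Dpgf_ge0 // exprn_ge0.
rewrite /EZs -nneseriesZl; last first.
  by move=> c _; rewrite !mule_ge0 ?kpow_ge0 // lee_fin exprn_ge0.
apply: eq_eseriesr => c _; rewrite [kpow o i 1 c]kpow_fin // -!EFinM.
congr (_%:E); case: c => [|c] /=; first by rewrite !(mul0r, mulr0).
by rewrite exprS; ring.
Qed.

(* Divide the recursion by [pgf s > 0] and use [Dpgf s <= m pgf s]. *)
Lemma EZs_le i s : (0 <= s <= 1)%R -> EZs i s <= (m ^+ i * iter i pgf s)%:E.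
Proof.
elim: i s => [s s01|i IH s s01]; first by rewrite EZs0 ?mul1r // (andP s01).1.
have Fs01 := pgf_itv _ o_ge0 o_sum1 _ s01; have Fs0 := pgf_gt0 _ o_ge0 o_sum1 _ o0_gt0 s01.
have iter0 : (0 <= m ^+ i * iter i.+1 pgf s)%R.
  by rewrite mulr_ge0 ?exprn_ge0 ?mean_ge0 // (andP (iter_pgf_itv _ o_ge0 o_sum1 i.+1 _ s01)).1.
rewrite -(lee_pmul2l (x := (pgf s)%:E)) ?lte_fin // pgf_mul_EZsS //.
apply: le_trans (lee_wpmul2l _ (IH _ Fs01)) _; first by rewrite lee_fin Dpgf_ge0.
have := Dpgf_le _ s01; rewrite -!EFinM lee_fin -iterSr exprS; nra.
Qed.

End finite_mean.

Section conditioning_on_extinction.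
Context {R : realType}.
Variable o : nat -> R.
Hypothesis o_ge0 : forall k, (0 <= o k)%R.
Hypothesis o_sum1 : \sum_(k <oo) (o k)%:E = 1.

(* The weights [g^a] are nonincreasing in [a]: per unit of mass, the first
   [k+1] terms get at least [g^k] and the tail at most [g^k]. *)
Lemma head_mass_pgf_le k g : (0 <= g <= 1)%R ->
  ((\sum_(0 <= a < k.+1) o a) * pgf o g <= \sum_(0 <= a < k.+1) o a * g ^+ a)%R.
Proof.
move=> g01; have /andP[g0 g1] := g01.
set A := (\sum_(0 <= a < k.+1) o a)%R; set B := (\sum_(0 <= a < k.+1) o a * g ^+ a)%R.
set T := \sum_(k.+1 <= a <oo) (o a)%:E.
set C := \sum_(k.+1 <= a <oo) (o a * g ^+ a)%:E.
have oge0 a : 0 <= (o a)%:E by rewrite lee_fin.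
have ogge0 a : 0 <= (o a * g ^+ a)%:E by rewrite lee_fin mulr_ge0 // exprn_ge0.
have A0 : (0 <= A)%R by apply: sumr_ge0.
have B0 : (0 <= B)%R by apply: sumr_ge0 => a _; rewrite mulr_ge0 // exprn_ge0.
have T0 : 0 <= T by apply: nneseries_ge0.
have C0 : 0 <= C by apply: nneseries_ge0.
have mass_split : 1 = A%:E + T.
  by rewrite -o_sum1 (nneseries_split 0 k.+1) // add0n sumEFin.
have pgf_split : (pgf o g)%:E = B%:E + C.
  by rewrite -genfun_pgf // /genfun (nneseries_split 0 k.+1) // add0n sumEFin.
have head_ge : (g ^+ k * A <= B)%R.
  rewrite /A /B mulr_sumr !big_nat; apply: ler_sum => a /andP[_ ak].
  by rewrite mulrC ler_wpM2l // ler_wiXn2l // -ltnS.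
have tail_le : C <= (g ^+ k)%:E * T.
  rewrite /C /T -nneseriesZl // eseries_cond [X in _ <= X]eseries_cond.
  apply: lee_nneseries => [a _ _|a /= ka]; first exact: ogge0.
  by rewrite -EFinM lee_fin mulrC ler_wpM2r // ler_wiXn2l // ltnW.
rewrite -lee_fin EFinM pgf_split ge0_muleDr //.
apply: (@le_trans _ _ (A%:E * B%:E + B%:E * T)).
  rewrite leeD2l // (le_trans (lee_wpmul2l _ tail_le)) ?lee_fin //.
  by rewrite muleA -EFinM mulrC lee_wpmul2r.
by rewrite muleC -ge0_muleDr ?lee_fin // -mass_split mule1.
Qed.

Hypothesis o0_gt0 : (0 < o 0%N)%R.

Lemma iter_pgf0_gt0 n : (0 < n)%N -> (0 < iter n (pgf o) 0)%R.
Proof.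
case: n => // n _; apply: pgf_gt0 => //.
by apply: iter_pgf_itv; rewrite // lexx ler01.
Qed.

Lemma cond_Z1_le_ge k n : (0 < n)%N -> prob_Z1_le o k <= cond_Z1_le o k n.
Proof.
case: n => // n _; set g := iter n (pgf o) 0%R.
have g01 : (0 <= g <= 1)%R by apply: iter_pgf_itv; rewrite // lexx ler01.
rewrite /cond_Z1_le.
have -> : prob_Z1_le o k = (\sum_(0 <= a < k.+1) o a)%:E.
  by rewrite -sumEFin; apply: eq_bigr => a _; rewrite /probZ kpow1_from1.
have -> : (\sum_(0 <= a < k.+1) jointZ o 1 n.+1 a 0)%E = (\sum_(0 <= a < k.+1) o a * g ^+ a)%:E.
  rewrite -sumEFin; apply: eq_bigr => a _.
  by rewrite /jointZ ltn0Sn kpow1_from1 // subn1 kpow_to0 // -EFinM.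
have Z_extinct : probZ o n.+1 0 = (pgf o g)%:E by rewrite /probZ kpow_to0 // expr1.
have Fg0 : (0 < pgf o g)%R by exact: pgf_gt0.
rewrite Z_extinct inver gt_eqF //= -EFinM lee_fin ler_pdivlMr //.
exact: head_mass_pgf_le.
Qed.

Lemma sum_size_joint_late i n : (n <= i)%N ->
  \sum_(a <oo) (a%:R)%:E * jointZ o i n a 0 = 0.
Proof.
move=> ni; apply: eseries0 => -[|a] _ _; first by rewrite mul0e.
rewrite /jointZ; case: ifP => [iln|_].
  have -> : (n - i = 0)%N by apply/eqP; rewrite subn_eq0.
  by rewrite /= mulr0n !mule0.
by rewrite kpow_from0 //= mulr0n !mule0.
Qed.

Lemma condexp_Zi_EZs i n : (i < n)%N ->
  condexp_Zi o i n = EZs o i (iter (n - i) (pgf o) 0%R) * ((iter n (pgf o) 0%R)^-1)%:E.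
Proof.
move=> iltn; rewrite /condexp_Zi /probZ kpow_to0 // expr1.
rewrite inver gt_eqF ?iter_pgf0_gt0 ?(leq_ltn_trans _ iltn) //.
congr (_ * _); apply: eq_eseriesr => a _.
by rewrite /jointZ (ltnW iltn) kpow_to0.
Qed.

Lemma condexp_Zi_le i n : (0 < n)%N -> condexp_Zi o i n <= mean o ^+ i.
Proof.
move=> n0; have mean0 : 0 <= mean o.
  by apply: nneseries_ge0 => k _ _; rewrite lee_fin mulr_ge0.
have [ni|iltn] := leqP n i.
  by rewrite /condexp_Zi sum_size_joint_late // mul0e expe_ge0.
rewrite condexp_Zi_EZs //; set g := iter (n - i) (pgf o) 0%R.
have g01 : (0 <= g <= 1)%R by apply: iter_pgf_itv; rewrite // lexx ler01.
have Zn0 := iter_pgf0_gt0 _ n0.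
have Zn_iter : iter n (pgf o) 0%R = iter i (pgf o) g by rewrite /g -iterD subnKC // ltnW.
move: mean0; case mean_o : (mean o) => [m| |] // _.
  apply: le_trans (lee_wpmul2r _ (@EZs_le _ o o_ge0 o_sum1 o0_gt0 m mean_o i g g01)) _.
    by rewrite lee_fin invr_ge0 ltW.
  by rewrite -Zn_iter -EFinM mulfK ?gt_eqF // EFin_expe.
(* With an infinite mean only [i = 0] is not trivial. *)
case: i iltn g g01 Zn_iter => [|i] _ g g01 Zn_iter.
  rewrite /= in Zn_iter; rewrite Zn_iter in Zn0 *.
  by rewrite EZs0 ?(andP g01).1 // -EFinM mulfV ?gt_eqF.
suff -> : (+oo : \bar R) ^+ i.+1 = +oo by rewrite leey.
by elim: {Zn_iter} i => [|i IH]; rewrite expeS ?expe0 ?mule1 // IH mulyy.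
Qed.

End conditioning_on_extinction.

Section conditioned_offspring_law.
Context {R : realType} {p : nat -> R} {q : R}.
Hypothesis p_ge0 : forall k, (0 <= p k)%R.
Hypothesis q_gt0 : (0 < q)%R.

Lemma qlaw_ge0 k : (0 <= qlaw p q k)%R.
Proof. by rewrite /qlaw !mulr_ge0 ?p_ge0 ?invr_ge0 ?exprn_ge0 ?ltW. Qed.

Lemma qlaw0_gt0 : (0 < p 0%N)%R -> (0 < qlaw p q 0%N)%R.
Proof. by move=> p0; rewrite /qlaw expr0 mulr1 mulr_gt0 ?invr_gt0. Qed.

Lemma qlaw_sum1 : genfun p q = q%:E -> \sum_(k <oo) (qlaw p q k)%:E = 1.
Proof.
move=> fq; transitivity (\sum_(k <oo) (q^-1)%:E * (p k * q ^+ k)%:E).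
  by apply: eq_eseriesr => k _; rewrite -EFinM /qlaw mulrCA mulrA.
rewrite nneseriesZl; last by move=> k _; rewrite lee_fin mulr_ge0 ?p_ge0 ?exprn_ge0 ?ltW.
by rewrite -/(genfun p q) fq -EFinM mulVf ?gt_eqF.
Qed.

End conditioned_offspring_law.

Theorem lemma3 (R : realType) (p : nat -> R) (q : R) :
  is_pmf p ->
  (0 < p 0%N)%R ->
  1 < mean p < +oo ->
  (0 < q < 1)%R ->
  genfun p q = q%:E ->
  (forall (k n : nat), (1 <= n)%N ->
     prob_Z1_le (qlaw p q) k <= cond_Z1_le (qlaw p q) k n)
  /\
  (forall (i n : nat), (1 <= n)%N ->
     condexp_Zi (qlaw p q) i n <= mean (qlaw p q) ^+ i).
Proof.
move=> [p_ge0 _] p0_gt0 _ /andP[q_gt0 _] fq.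
have o_ge0 := qlaw_ge0 p_ge0 q_gt0.
have o_sum1 := qlaw_sum1 p_ge0 q_gt0 fq.
have o0_gt0 := qlaw0_gt0 q_gt0 p0_gt0.
by split=> [k n|i n]; [exact: cond_Z1_le_ge | exact: condexp_Zi_le].
Qed.
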